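(* Let $D$ be a set (the input domain) and consider a multi-task model consisting of three conditional probability distributions $\mathcal{P}^1(y\mid \vec{x}),\mathcal{P}^2(y\mid \vec{x}),\mathcal{P}^3(y\mid \vec{x})$ on labels $y\in\{-1,+1\}$, for $\vec{x}\in D$, which encodes the bias $$\mathcal{P}^1(+1\mid \vec{x})+\mathcal{P}^2(+1\mid \vec{x})+\mathcal{P}^3(+1\mid \vec{x})=\tfrac{3}{2}\quad\text{for all }\vec{x}\in D.$$ Let $V=\{(\mathcal{P}^1(+1\mid\vec{x}),\mathcal{P}^2(+1\mid\vec{x}),\mathcal{P}^3(+1\mid\vec{x})) : \vec{x}\in D\}\subset[0,1]^3$. Let $\vec{v}_1=(1,0,\tfrac12)$, $\vec{v}_2=(0,1,\tfrac12)$, $\vec{v}_3=(\tfrac12,1,0)$, $\vec{v}_4=(\tfrac12,0,1)$, $\vec{v}_5=(0,\tfrac12,1)$, $\vec{v}_6=(1,\tfrac12,0)$, and for $0<\eta<1$ let $\vec{u}_i(\eta)=\eta\vec{v}_i+(1-\eta)(\tfrac12,\tfrac12,\tfrac12)$, $i=1,\dots,6$. Let $V_{2/3}$ be the convex hull of $\vec{u}_1(2/3),\dots,\vec{u}_6(2/3)$. If $V_{2/3}$ is strictly contained in the convex hull of $V$, in the sense that $V_{2/3}$ lies in the relative interior of $\mathrm{conv}(V)$ within the plane $\{z\in\mathbb{R}^3: z_1+z_2+z_3=\tfrac32\}$ (equivalently, $\mathrm{conv}(V)$ contains $\vec{u}_1(\eta),\dots,\vec{u}_6(\eta)$ for some $\eta>\tfrac23$),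 then the multi-task model is contextual, i.e. its operational scenario admits no noncontextual ontological model.
   Context: Operational scenario of the multi-task model: preparations $\mathbf{S}_{\vec{x}}$, one for each $\vec{x}\in D$; effects $\mathbf{E}^k_y$ ($k=1,2,3$, $y=\pm1$), a trivial effect $\Omega$ and a null effect $\emptyset$; operational statistics $P(\mathbf{E}^k_y\mid\mathbf{S}_{\vec{x}})=\mathcal{P}^k(y\mid\vec{x})$, $P(\Omega\mid\mathbf{S})=1$, $P(\emptyset\mid\mathbf{S})=0$. Preparation densities are finite convex combinations $s=\sum_j p_j\mathbf{S}_j$ of preparations, and effect densities are finite convex combinations $e=\sum_j q_j\mathbf{E}_j$ of effects; statistics are extended bilinearly, $P(e\mid s)=\sum_{j,l}q_l p_j P(\mathbf{E}_l\mid\mathbf{S}_j)$. Two preparation densities $s_1,s_2$ are operationally equivalent ($s_1\sim s_2$) iff $P(\mathbf{E}\mid s_1)=P(\mathbf{E}\mid s_2)$ for all effects $\mathbf{E}$; two effect densities $e_1,e_2$ are operationally equivalent iff $P(e_1\mid\mathbf{S})=P(e_2\mid\mathbf{S})$ for all preparations $\mathbf{S}$. An ontological model consists of a measure space $\Lambda$ of ontic states, a probability density $\mu_{\mathbf{S}}$ on $\Lambda$ for each preparation and a measurable response function $\xi_{\mathbf{E}}:\Lambda\to[0,1]$ for each effect, with $\xi_\Omega\equiv1$, $\xi_\emptyset\equiv0$, extended linearly to densities ($\mu_{\sum p_j\mathbf{S}_j}=\sum p_j\mu_{\mathbf{S}_j}$, $\xi_{\sum q_j\mathbf{E}_j}=\sum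 q_j\xi_{\mathbf{E}_j}$), such that $P(\mathbf{E}\mid\mathbf{S})=\int_\Lambda\mu_{\mathbf{S}}(\lambda)\xi_{\mathbf{E}}(\lambda)\,d\lambda$ for all preparations and effects. It is noncontextual if operationally equivalent preparation densities have identical distributions $\mu$ (for all $\lambda$) and operationally equivalent effect densities have identical response functions $\xi$. The multi-task model is noncontextual iff such a noncontextual ontological model exists, and contextual otherwise. *)

From HB Require Import structures.
From mathcomp Require Import all_boot all_order all_algebra.
From mathcomp Require Import all_classical all_reals all_analysis.

Set Implicit Arguments.
Unset Strict Implicit.
Unset Printing Implicit Defensive.

Import Order.TTheory GRing.Theory Num.Theory.
Local Open Scope ring_scope.

(* Effects of the operational scenario: E^k_y (k : 'I_3 stands for k = 1,2,3;
   y : bool, true = +1, false = -1), the trivial effect Omega and the null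
   effect. *)
Inductive effect : Type :=
  | EffE of 'I_3 & bool
  | EffOmega
  | EffNull.

Section MultiTask.
Variables (R : realType) (D : Type).

(* A multi-task model: P k x y = P^{k+1}(y | x). *)
Definition is_multitask (P : 'I_3 -> D -> bool -> R) : Prop :=
  forall k x, 0 <= P k x true /\ 0 <= P k x false /\ P k x true + P k x false = 1.

Definition opstat (P : 'I_3 -> D -> bool -> R) (E : effect) (x : D) : R :=
  match E with
  | EffE k y => P k x y
  | EffOmega => 1
  | EffNull => 0
  end.

Definition is_density (T : Type) (s : seq (R * T)) : Prop :=
  (forall i : 'I_(size s), 0 <= (tnth (in_tuple s) i).1) /\ \sum_(p <- s) p.1 = 1.

Definition opstat_dens (P : 'I_3 -> D -> bool -> R)
    (e : seq (R * effect)) (s : seq (R * D)) : R :=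
  \sum_(q <- e) \sum_(p <- s) q.1 * p.1 * opstat P q.2 p.2.

Definition prep_equiv P (s1 s2 : seq (R * D)) : Prop :=
  forall E : effect, opstat_dens P [:: (1, E)] s1 = opstat_dens P [:: (1, E)] s2.

Definition eff_equiv P (e1 e2 : seq (R * effect)) : Prop :=
  forall x : D, opstat_dens P e1 [:: (1, x)] = opstat_dens P e2 [:: (1, x)].

Definition lin_ext (T L : Type) (f : T -> L -> R) (s : seq (R * T)) (l : L) : R :=
  \sum_(p <- s) p.1 * f p.2 l.

(* An ontological model on a measure space (Lambda, m): mu x is the probability
   density of preparation S_x, xi E the response function of effect E. *)
Definition ontological_model (P : 'I_3 -> D -> bool -> R)
    (d : measure_display) (Lambda : measurableType d)
    (m : {measure set Lambda -> \bar R})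
    (mu : D -> Lambda -> R) (xi : effect -> Lambda -> R) : Prop :=
  [/\
      forall x, [/\ measurable_fun setT (mu x), (forall l, 0 <= mu x l)
                   & (\int[m]_l (mu x l)%:E = 1%:E)%E],
      forall E, measurable_fun setT (xi E) /\ (forall l, 0 <= xi E l <= 1),
      (forall l, xi EffOmega l = 1) /\ (forall l, xi EffNull l = 0)
    &
      forall E x, (\int[m]_l (mu x l * xi E l)%:E = (opstat P E x)%:E)%E].

Definition noncontextual_model P d (Lambda : measurableType d)
    (m : {measure set Lambda -> \bar R}) mu xi : Prop :=
  [/\ ontological_model P m mu xi,
      forall s1 s2, is_density s1 -> is_density s2 -> prep_equiv P s1 s2 ->
        forall l, lin_ext mu s1 l = lin_ext mu s2 l
    & forall e1 e2, is_density e1 -> is_density e2 -> eff_equiv P e1 e2 ->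
        forall l, lin_ext xi e1 l = lin_ext xi e2 l].

Definition contextual (P : 'I_3 -> D -> bool -> R) : Prop :=
  forall (d : measure_display) (Lambda : measurableType d)
    (m : {measure set Lambda -> \bar R})
    (mu : D -> Lambda -> R) (xi : effect -> Lambda -> R),
    ~ noncontextual_model P m mu xi.

(* Membership of a point z in R^3 (as 'I_3 -> R) in conv(V), where
   V = { (P^1(+1|x), P^2(+1|x), P^3(+1|x)) : x in D }. *)
Definition in_convV (P : 'I_3 -> D -> bool -> R) (z : 'I_3 -> R) : Prop :=
  exists s : seq (R * D), is_density s /\
    forall k, \sum_(p <- s) p.1 * P k p.2 true = z k.

End MultiTask.

(* The hexagon vertices v_1..v_6 (indexed 0..5) and u_i(eta). *)
Definition vtab (R : fieldType) : seq (seq R) :=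
  [:: [:: 1; 0; 2^-1]; [:: 0; 1; 2^-1]; [:: 2^-1; 1; 0];
      [:: 2^-1; 0; 1]; [:: 0; 2^-1; 1]; [:: 1; 2^-1; 0]].

Definition hexv (R : fieldType) (i : 'I_6) (k : 'I_3) : R :=
  nth 0 (nth [::] (vtab R) i) k.

Definition hexu (R : fieldType) (eta : R) (i : 'I_6) (k : 'I_3) : R :=
  eta * hexv R i k + (1 - eta) * 2^-1.

From HB Require Import structures.
From mathcomp Require Import all_boot all_order all_algebra.
From mathcomp Require Import all_classical all_reals all_analysis.
From mathcomp Require Import measurable_realfun lra.

Set Implicit Arguments.
Unset Strict Implicit.
Unset Printing Implicit Defensive.

Import Order.TTheory GRing.Theory Num.Theory.
Local Open Scope ring_scope.

(* Suppose a noncontextual model exists and let s_i be a preparation density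
   realising u_i(eta).  Antipodal vertices of the hexagon add up to
   (1, 1, 1), so the even mixtures of s_1, s_2, of s_3, s_4 and of s_5, s_6
   are operationally equivalent, and noncontextuality forces
   mu_1 + mu_2 = mu_3 + mu_4 = mu_5 + mu_6 =: c at every ontic state.
   Likewise (E^k_+ + E^k_-)/2 is equivalent to (Omega + null)/2, whence
   xi(E^k_-) = 1 - x_k with x_k := xi(E^k_+) in [0, 1].
   Each vertex v_i has a coordinate a equal to 1 and a coordinate b equal
   to 0; the test E^a_+ + E^b_- scores 1 + eta on u_i.  At every ontic state
   the six scores weighted by mu_i add up, pair by pair, to
   3c + sum (mu_i - mu_j)(x_a - x_b) <= 3c + c (|x_1 - x_2| + |x_2 - x_3|
   + |x_3 - x_1|) <= 5c.  Integrating gives 6 (1 + eta) <= 10. *)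

Section Densities.
Variable R : realType.
Implicit Types (T : Type) (a c : R).

Definition wsum T (f : T -> R) (s : seq (R * T)) : R := \sum_(p <- s) p.1 * f p.2.

Definition atom T (x : T) : seq (R * T) := [:: (1, x)].

Definition scale T c (s : seq (R * T)) : seq (R * T) := [seq (c * p.1, p.2) | p <- s].

Definition mix T a (s t : seq (R * T)) : seq (R * T) := scale a s ++ scale (1 - a) t.

Lemma lin_extE T L (f : T -> L -> R) s l : lin_ext f s l = wsum (f^~ l) s.
Proof. by []. Qed.

Lemma wsum_atom T (f : T -> R) x : wsum f (atom x) = f x.
Proof. by rewrite /wsum big_seq1 mul1r. Qed.

Lemma wsum_scale T (f : T -> R) c s : wsum f (scale c s) = c * wsum f s.
Proof. by rewrite /wsum big_map big_distrr; apply: eq_bigr => p _ /=; rewrite mulrA. Qed.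

Lemma wsum_mix T (f : T -> R) a s t :
  wsum f (mix a s t) = a * wsum f s + (1 - a) * wsum f t.
Proof. by rewrite /wsum big_cat -!/(wsum _ _) !wsum_scale. Qed.

Lemma lin_ext_mix T L (f : T -> L -> R) a s t l :
  lin_ext f (mix a s t) l = a * lin_ext f s l + (1 - a) * lin_ext f t l.
Proof. by rewrite !lin_extE wsum_mix. Qed.

Lemma wsum1 T (s : seq (R * T)) : wsum (fun=> 1) s = \sum_(p <- s) p.1.
Proof. by apply: eq_bigr => p _; rewrite mulr1. Qed.

Lemma wsum_ge0 T (f : T -> R) s :
  all (fun p => 0 <= p.1) s -> (forall x, 0 <= f x) -> 0 <= wsum f s.
Proof.
move=> + f_ge0; rewrite /wsum; elim: s => [|p s IHs] /=; first by rewrite big_nil.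
by move=> /andP[p_ge0 /IHs s_ge0]; rewrite big_cons addr_ge0 ?mulr_ge0.
Qed.

Lemma is_densityE T (s : seq (R * T)) :
  is_density s <-> all (fun p => 0 <= p.1) s /\ \sum_(p <- s) p.1 = 1.
Proof.
have tnthP := @all_tnthP _ _ (fun p : R * T => 0 <= p.1) (in_tuple s).
by split=> -[s_ge0 s1]; split=> //; apply/tnthP.
Qed.

Lemma is_density_atom T (x : T) : is_density (atom x).
Proof. by apply/is_densityE; rewrite /= ler01 big_seq1. Qed.

Lemma is_density_mix T a (s t : seq (R * T)) :
  0 <= a <= 1 -> is_density s -> is_density t -> is_density (mix a s t).
Proof.
move=> /andP[a_ge0 a_le1] /is_densityE[s_ge0 s1] /is_densityE[t_ge0 t1].
have scale_ge0 c u : 0 <= c -> all (fun p => 0 <= p.1) u ->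
    all (fun p => 0 <= p.1) (scale c u).
  by move=> c_ge0 u_ge0; rewrite all_map; apply: sub_all u_ge0 => p /= /(mulr_ge0 c_ge0).
apply/is_densityE; split; first by rewrite all_cat !scale_ge0 // subr_ge0.
by rewrite -wsum1 wsum_mix !wsum1 s1 t1 !mulr1 addrC subrK.
Qed.

End Densities.

Arguments atom {R T} x.
Arguments is_density_atom {R T} x.

Local Notation ord6 n := (@Ordinal 6 n isT).
Local Notation ord3 n := (@Ordinal 3 n isT).

Definition hex_one (i : 'I_6) : 'I_3 :=
  match val i with 0 | 5 => ord3 0 | 1 | 2 => ord3 1 | _ => ord3 2 end.

Definition hex_zero (i : 'I_6) : 'I_3 :=
  match val i with 1 | 4 => ord3 0 | 0 | 3 => ord3 1 | _ => ord3 2 end.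

Definition hex_test (R : ringType) (i : 'I_6) : seq (R * effect) :=
  [:: (1, EffE (hex_one i) true); (1, EffE (hex_zero i) false)].
Arguments hex_test {R} i.

Lemma hex_test_ge0 (R : numDomainType) i :
  all (fun q => 0 <= q.1) (hex_test i : seq (R * effect)).
Proof. by rewrite /= ler01. Qed.

Lemma hexv_one (R : fieldType) i : hexv R i (hex_one i) = 1.
Proof. by case: i => [[|[|[|[|[|[|i]]]]]] hi]. Qed.

Lemma hexv_zero (R : fieldType) i : hexv R i (hex_zero i) = 0.
Proof. by case: i => [[|[|[|[|[|[|i]]]]]] hi]. Qed.

Lemma big_ord6 (V : nmodType) (F : 'I_6 -> V) :
  \sum_(i < 6) F i =
  F (ord6 0) + F (ord6 1) + F (ord6 2) + F (ord6 3) + F (ord6 4) + F (ord6 5).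
Proof.
rewrite !big_ord_recl big_ord0 addr0 !addrA.
by congr (F _ + F _ + F _ + F _ + F _ + F _); apply: val_inj.
Qed.

Section Hexagon.
Variable R : realFieldType.

Lemma hexu_score (eta : R) i :
  hexu eta i (hex_one i) + (1 - hexu eta i (hex_zero i)) = 1 + eta.
Proof. by rewrite /hexu hexv_one hexv_zero; lra. Qed.

Lemma hexu_antipodal (eta : R) :
  [/\ forall k, hexu eta (ord6 0) k + hexu eta (ord6 1) k = 1,
      forall k, hexu eta (ord6 2) k + hexu eta (ord6 3) k = 1
    & forall k, hexu eta (ord6 4) k + hexu eta (ord6 5) k = 1].
Proof. by split=> -[[|[|[|k]]] hk] //; rewrite /hexu /hexv /=; lra. Qed.

Lemma subr_mul_le_norm (a b y : R) :
  0 <= a -> 0 <= b -> (a - b) * y <= (a + b) * `|y|.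
Proof.
move=> a_ge0 b_ge0; rewrite (le_trans (ler_norm _)) // normrM ler_wpM2r //.
by rewrite (le_trans (ler_normB _ _)) // !ger0_norm.
Qed.

Lemma cyclic_dist_le2 (x y z : R) : 0 <= x <= 1 -> 0 <= y <= 1 -> 0 <= z <= 1 ->
  `|x - y| + `|y - z| + `|z - x| <= 2.
Proof.
move=> /andP[x_ge0 x_le1] /andP[y_ge0 y_le1] /andP[z_ge0 z_le1].
by case: (lerP 0 (x - y)) => [/ger0_norm|/ltr0_norm] ->;
   case: (lerP 0 (y - z)) => [/ger0_norm|/ltr0_norm] ->;
   case: (lerP 0 (z - x)) => [/ger0_norm|/ltr0_norm] ->; lra.
Qed.

Lemma hexagon_score_le (a : 'I_6 -> R) (x : 'I_3 -> R) :
  (forall i, 0 <= a i) -> (forall k, 0 <= x k <= 1) ->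
  a (ord6 0) + a (ord6 1) = a (ord6 2) + a (ord6 3) ->
  a (ord6 2) + a (ord6 3) = a (ord6 4) + a (ord6 5) ->
  \sum_(i < 6) a i * (x (hex_one i) + (1 - x (hex_zero i))) <=
  5 * (a (ord6 0) + a (ord6 1)).
Proof.
move=> a_ge0 x01 a23 a45; rewrite big_ord6 /hex_one /hex_zero /=.
have c_ge0 : 0 <= a (ord6 0) + a (ord6 1) by rewrite addr_ge0.
have d01 := subr_mul_le_norm (x (ord3 0) - x (ord3 1)) (a_ge0 (ord6 0)) (a_ge0 (ord6 1)).
have d23 := subr_mul_le_norm (x (ord3 1) - x (ord3 2)) (a_ge0 (ord6 2)) (a_ge0 (ord6 3)).
have d45 := subr_mul_le_norm (x (ord3 2) - x (ord3 0)) (a_ge0 (ord6 4)) (a_ge0 (ord6 5)).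
have := ler_wpM2l c_ge0 (cyclic_dist_le2 (x01 (ord3 0)) (x01 (ord3 1)) (x01 (ord3 2))).
rewrite -a45 -a23 in d23 d45; lra.
Qed.

End Hexagon.

Section Operational.
Variables (R : realType) (D : Type) (P : 'I_3 -> D -> bool -> R).

Lemma opstat_densE e s :
  opstat_dens P e s = \sum_(q <- e) q.1 * wsum (opstat P q.2) s.
Proof.
apply: eq_bigr => q _; rewrite /wsum big_distrr.
by apply: eq_bigr => p _ /=; rewrite mulrA.
Qed.

Lemma opstat_dens_atoml E s : opstat_dens P (atom E) s = wsum (opstat P E) s.
Proof. by rewrite opstat_densE big_seq1 mul1r. Qed.

Lemma opstat_dens_atomr e x : opstat_dens P e (atom x) = wsum (opstat P ^~ x) e.
Proof. by rewrite opstat_densE; apply: eq_bigr => q _; rewrite wsum_atom. Qed.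

Hypothesis HP : is_multitask P.

Lemma wsum_opstat_false k s :
  wsum (opstat P (EffE k false)) s = \sum_(p <- s) p.1 - wsum (P k ^~ true) s.
Proof.
rewrite -wsum1 /wsum -sumrB; apply: eq_bigr => p _ /=.
have [_ [_ <-]] := HP k p.2; rewrite mulrDr; lra.
Qed.

Lemma opstat_dens_hex_test i s :
  opstat_dens P (hex_test i) s =
  wsum (P (hex_one i) ^~ true) s + (\sum_(p <- s) p.1 - wsum (P (hex_zero i) ^~ true) s).
Proof. by rewrite opstat_densE !big_cons big_nil !mul1r addr0 wsum_opstat_false. Qed.

Lemma prep_equiv_of_vec s t :
  \sum_(p <- s) p.1 = 1 -> \sum_(p <- t) p.1 = 1 ->
  (forall k, wsum (P k ^~ true) s = wsum (P k ^~ true) t) -> prep_equiv P s t.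
Proof.
move=> s1 t1 st E; rewrite !(opstat_dens_atoml E).
case: E => [k [] | |].
- exact: st.
- by rewrite !wsum_opstat_false s1 t1 st.
- by rewrite !wsum1 s1 t1.
- by rewrite /wsum !big1 // => p _; rewrite mulr0.
Qed.

Lemma eff_equiv_flip k :
  eff_equiv P (mix (1/2) (atom (EffE k true)) (atom (EffE k false)))
              (mix (1/2) (atom EffOmega) (atom EffNull)).
Proof.
move=> x; rewrite !(opstat_dens_atomr _ x) !wsum_mix !wsum_atom /=.
by have [_ [_ Pkx]] := HP k x; lra.
Qed.

End Operational.

Section Integration.
Context (R : realType) (d : measure_display) (Lambda : measurableType d).
Variables (m : {measure set Lambda -> \bar R}) (A : Type) (g : A -> Lambda -> R).
Hypotheses (g_meas : forall a, measurable_fun setT (g a))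
           (g_ge0 : forall a l, 0 <= g a l).

Lemma measurable_lin_ext r : measurable_fun setT (lin_ext g r).
Proof. by apply: measurable_sum => p; apply: measurable_funM. Qed.

Lemma lin_ext_ge0 r l : all (fun p => 0 <= p.1) r -> 0 <= lin_ext g r l.
Proof. by move=> r_ge0; rewrite lin_extE wsum_ge0. Qed.

Lemma integral_lin_ext r : all (fun p => 0 <= p.1) r ->
  (\int[m]_l (lin_ext g r l)%:E = \sum_(t <- r) t.1%:E * \int[m]_l (g t.2 l)%:E)%E.
Proof.
elim: r => [_|t r IHr /= /andP[t_ge0 r_ge0]].
  rewrite big_nil -(integral0 m setT).
  by apply: eq_integral => l _; rewrite /lin_ext big_nil.
under eq_integral do rewrite /lin_ext big_cons EFinD -/(lin_ext g r _).
rewrite ge0_integralD //; first last.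
- by apply/measurable_EFinP; apply: measurable_lin_ext.
- by move=> l _; rewrite lee_fin lin_ext_ge0.
- by apply/measurable_EFinP; apply: measurable_funM.
- by move=> l _; rewrite lee_fin mulr_ge0.
under eq_integral do rewrite EFinM.
rewrite ge0_integralZl_EFin // ?IHr ?big_cons //.
- by move=> l _; rewrite lee_fin.
- exact/measurable_EFinP.
Qed.

End Integration.

Section NoncontextualModel.
Variables (R : realType) (D : Type) (P : 'I_3 -> D -> bool -> R).
Variables (d : measure_display) (Lambda : measurableType d).
Variables (m : {measure set Lambda -> \bar R}).
Variables (mu : D -> Lambda -> R) (xi : effect -> Lambda -> R).

Section Ontological.
Hypothesis Hom : ontological_model P m mu xi.

Let mu_meas x : measurable_fun setT (mu x). Proof. by case: Hom => /(_ x)[]. Qed.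
Let mu_ge0 x l : 0 <= mu x l. Proof. by case: Hom => /(_ x)[]. Qed.
Let xi_meas E : measurable_fun setT (xi E). Proof. by case: Hom => _ /(_ E)[]. Qed.
Let xi_ge0 E l : 0 <= xi E l. Proof. by case: Hom => _ /(_ E)[_ /(_ l)/andP[]]. Qed.

Lemma measurable_mu_xi s e :
  measurable_fun setT (fun l => lin_ext mu s l * lin_ext xi e l).
Proof. by apply: measurable_funM; apply: measurable_lin_ext. Qed.

Lemma mu_xi_ge0 s e l : all (fun p => 0 <= p.1) s -> all (fun q => 0 <= q.1) e ->
  0 <= lin_ext mu s l * lin_ext xi e l.
Proof. by move=> s_ge0 e_ge0; rewrite mulr_ge0 ?lin_ext_ge0. Qed.

Lemma integral_mu_xi s e : all (fun p => 0 <= p.1) s -> all (fun q => 0 <= q.1) e ->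
  (\int[m]_l (lin_ext mu s l * lin_ext xi e l)%:E = (opstat_dens P e s)%:E)%E.
Proof.
move=> s_ge0 e_ge0; have [_ _ _ stat] := Hom.
pose g E l := lin_ext mu s l * xi E l.
have g_meas E : measurable_fun setT (g E).
  by apply: measurable_funM => //; apply: measurable_lin_ext.
have g_ge0 E l : 0 <= g E l by rewrite mulr_ge0 ?lin_ext_ge0.
have integral_g E : (\int[m]_l (g E l)%:E = (wsum (opstat P E) s)%:E)%E.
  pose h x l := mu x l * xi E l.
  have h_meas x : measurable_fun setT (h x) by apply: measurable_funM.
  have h_ge0 x l : 0 <= h x l by rewrite mulr_ge0.
  transitivity (\int[m]_l (lin_ext h s l)%:E)%E.
    apply: eq_integral => l _; rewrite /g /lin_ext big_distrl.
    by congr EFin; apply: eq_bigr => p _ /=; rewrite mulrA.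
  rewrite integral_lin_ext // /wsum -sumEFin.
  by apply: eq_bigr => p _; rewrite stat.
transitivity (\int[m]_l (lin_ext g e l)%:E)%E.
  apply: eq_integral => l _; rewrite /g /lin_ext big_distrr.
  by congr EFin; apply: eq_bigr => q _ /=; rewrite mulrCA.
rewrite integral_lin_ext // opstat_densE -sumEFin.
by apply: eq_bigr => q _; rewrite integral_g.
Qed.

End Ontological.

Hypotheses (HP : is_multitask P) (Hnc : noncontextual_model P m mu xi).

Lemma lin_ext_mu_add_eq s1 s2 t1 t2 l :
  is_density s1 -> is_density s2 -> is_density t1 -> is_density t2 ->
  (forall k, wsum (P k ^~ true) s1 + wsum (P k ^~ true) s2 =
             wsum (P k ^~ true) t1 + wsum (P k ^~ true) t2) ->
  lin_ext mu s1 l + lin_ext mu s2 l = lin_ext mu t1 l + lin_ext mu t2 l.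
Proof.
move=> s1_dens s2_dens t1_dens t2_dens st; have [_ prep_nc _] := Hnc.
have half01 : 0 <= (1/2 : R) <= 1 by lra.
have s_dens := is_density_mix half01 s1_dens s2_dens.
have t_dens := is_density_mix half01 t1_dens t2_dens.
have vec k : wsum (P k ^~ true) (mix (1/2) s1 s2) = wsum (P k ^~ true) (mix (1/2) t1 t2).
  by rewrite !wsum_mix; have := st k; lra.
case/is_densityE: (s_dens) => _ s_one; case/is_densityE: (t_dens) => _ t_one.
have := prep_nc _ _ s_dens t_dens (prep_equiv_of_vec HP s_one t_one vec) l.
by rewrite !lin_ext_mix; lra.
Qed.

Lemma xi_false k l : xi (EffE k false) l = 1 - xi (EffE k true) l.
Proof.
have [[_ _ [xi_Omega xi_Null] _] _ eff_nc] := Hnc.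
have half01 : 0 <= (1/2 : R) <= 1 by lra.
have := eff_nc _ _ (is_density_mix half01 (is_density_atom _) (is_density_atom _))
  (is_density_mix half01 (is_density_atom _) (is_density_atom _)) (eff_equiv_flip HP k) l.
by rewrite !lin_ext_mix !lin_extE !wsum_atom xi_Omega xi_Null; lra.
Qed.

Lemma lin_ext_hex_test i l :
  lin_ext xi (hex_test i) l =
  xi (EffE (hex_one i) true) l + (1 - xi (EffE (hex_zero i) true) l).
Proof. by rewrite /lin_ext !big_cons big_nil xi_false /= !mul1r addr0. Qed.

Section HexagonBound.
Variables (eta : R) (s : 'I_6 -> seq (R * D)).
Hypothesis s_hex :
  forall i, is_density (s i) /\ forall k, wsum (P k ^~ true) (s i) = hexu eta i k.

Let s_dens i : is_density (s i). Proof. by case: (s_hex i). Qed.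
Let s_ge0 i : all (fun p => 0 <= p.1) (s i). Proof. by case/is_densityE: (s_dens i). Qed.
Let s_sum1 i : \sum_(p <- s i) p.1 = 1. Proof. by case/is_densityE: (s_dens i). Qed.

Lemma hex_test_sum_le l :
  \sum_(i < 6) lin_ext mu (s i) l * lin_ext xi (hex_test i) l <=
  5 * (lin_ext mu (s (ord6 0)) l + lin_ext mu (s (ord6 1)) l).
Proof.
have [[mu_dens xi_resp _ _] _ _] := Hnc.
have mu_antipodal i j i' j' : (forall k, hexu eta i k + hexu eta j k = 1) ->
    (forall k, hexu eta i' k + hexu eta j' k = 1) ->
    lin_ext mu (s i) l + lin_ext mu (s j) l = lin_ext mu (s i') l + lin_ext mu (s j') l.
  move=> ij i'j'; apply: lin_ext_mu_add_eq => // k.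
  by rewrite !(s_hex _).2 ij i'j'.
have [a01 a23 a45] := hexu_antipodal eta.
under eq_bigr do rewrite lin_ext_hex_test.
apply: (hexagon_score_le (a := fun i => lin_ext mu (s i) l)
                         (x := fun k => xi (EffE k true) l)).
- by move=> i; apply: lin_ext_ge0 => // x; case: (mu_dens x).
- by move=> k; case: (xi_resp (EffE k true)).
- exact: mu_antipodal a01 a23.
- exact: mu_antipodal a23 a45.
Qed.

Lemma integral_hex_test i :
  (\int[m]_l (lin_ext mu (s i) l * lin_ext xi (hex_test i) l)%:E = (1 + eta)%:E)%E.
Proof.
have [Hom _ _] := Hnc.
rewrite integral_mu_xi ?hex_test_ge0 // opstat_dens_hex_test //.
by rewrite s_sum1 !(s_hex i).2 hexu_score.
Qed.

Lemma integral_mu_pair :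
  (\int[m]_l (5 * (lin_ext mu (s (ord6 0)) l + lin_ext mu (s (ord6 1)) l))%:E =
   (5 * 2)%:E)%E.
Proof.
have [Hom _ _] := Hnc; have [_ _ [xi_Omega _] _] := Hom.
pose Omega5 : seq (R * effect) := [:: (5, EffOmega)].
transitivity
  (\int[m]_l (lin_ext mu (s (ord6 0) ++ s (ord6 1)) l * lin_ext xi Omega5 l)%:E)%E.
  apply: eq_integral => l _; rewrite /lin_ext big_cat big_seq1 xi_Omega.
  by congr EFin; rewrite mulr1 mulrC.
rewrite integral_mu_xi ?all_cat ?s_ge0 /= ?ler0n //.
by rewrite opstat_densE big_seq1 wsum1 big_cat !s_sum1.
Qed.

Lemma hexagon_eta_le : eta <= 2/3.
Proof.
have [Hom _ _] := Hnc; have [mu_dens _ _ _] := Hom.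
have integral_tests : (\int[m]_l
    (\sum_(i < 6) lin_ext mu (s i) l * lin_ext xi (hex_test i) l)%:E =
    (6 * (1 + eta))%:E)%E.
  under eq_integral do rewrite -sumEFin.
  rewrite ge0_integral_sum //.
  - under eq_bigr do rewrite integral_hex_test.
    by rewrite sumEFin sumr_const card_ord mulr_natl.
  - by move=> i; apply/measurable_EFinP; apply: measurable_mu_xi.
  - by move=> i l _; rewrite lee_fin mu_xi_ge0 ?hex_test_ge0.
have : ((6 * (1 + eta))%:E <= (5 * 2)%:E)%E.
  rewrite -integral_tests -integral_mu_pair; apply: ge0_le_integral => //.
  - by move=> l _; rewrite lee_fin sumr_ge0 // => i _; rewrite mu_xi_ge0 ?hex_test_ge0.
  - by apply/measurable_EFinP; apply: measurable_sum => i; apply: measurable_mu_xi.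
  - apply/measurable_EFinP; apply: measurable_funM; first exact: measurable_cst.
    by apply: measurable_funD; apply: measurable_lin_ext => x; case: (mu_dens x).
  - by move=> l _; rewrite lee_fin hex_test_sum_le.
by rewrite lee_fin; lra.
Qed.

End HexagonBound.

End NoncontextualModel.

Theorem theorem1 (R : realType) (D : Type) (P : 'I_3 -> D -> bool -> R) :
  is_multitask P ->
  (forall x, \sum_(k < 3) P k x true = 3 / 2) ->
  (exists eta : R, 2 / 3 < eta < 1 /\ forall i : 'I_6, in_convV P (hexu eta i)) ->
  contextual P.
Proof.
move=> HP _ [eta [/andP[eta_gt _] eta_conv]] d Lambda m mu xi Hnc.
have [s s_hex] := choice eta_conv.
by have := hexagon_eta_le HP Hnc s_hex; rewrite leNgt eta_gt.
Qed.
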